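(* Let $\mathsf{K}$ be a commutative idempotent semiring, $N\ge1$, $\mathsf{A}\in\mathsf{K}^{N\times N}$, $\mathsf{b}\in\mathsf{K}^{N\times1}$, $\mathsf{c}\in\mathsf{K}^{1\times N}$, and $\mathsf{S}_N=\mathsf{c}(\mathsf{A}X)^*\mathsf{b}\in\mathsf{K}[[X]]$. Then $$\mathsf{S}_N=\bigoplus_{\pi\in\mathscr{P}_N}w(\pi)\Big(\bigoplus_{C\in\mathscr{A}(\pi)}\ \bigotimes_{\gamma\in C}w(\gamma)^+\Big),$$ where the term corresponding to $C=\emptyset$ is $\mathbb{1}$ (and $\emptyset\in\mathscr{A}(\pi)$ for every $\pi$).
   Context: $(\mathsf{A}X)^*=\bigoplus_{k\ge0}\mathsf{A}^kX^k$, so $\mathsf{S}_N=\bigoplus_k \mathsf{c}\mathsf{A}^k\mathsf{b}\,X^k$. For a series $U$ with zero constant coefficient, $U^*=\bigoplus_{k\ge0}U^k$ and $U^+=UU^*$. The digraph $G_N$ has nodes $1,\dots,N$, an input node $in$ and an output node $out$; arcs $j\to i$ with weight $\mathsf{A}_{ij}X$ for $1\le i,j\le N$, arcs $in\to i$ with weight $\mathsf{b}_i$, and arcs $i\to out$ with weight $\mathsf{c}_i$. The weight $w(\pi)$ of a path is the product of the weights of its arcs. A path is elementary if it has no repeated node; an elementary circuit is a closed path with no repeated node other than its common start and end. Two circuits are cyclic conjugates if one is obtained from the other by a circular permutation; by commutativity conjugates have equal weight, so $w(\gamma)$ is defined for a conjugacy class $\gamma$. $\mathscr{C}_N$ is the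 set of conjugacy classes of elementary circuits of $G_N$; $\mathscr{P}_N$ is the set of elementary paths from $in$ to $out$. For a path $\pi$, a set $C\subseteq\mathscr{C}_N$ is accessible from $\pi$ if the union of the circuits of $C$ and of the path $\pi$ is a connected subgraph in the undirected sense; $\mathscr{A}(\pi)$ is the set of subsets $C\subseteq\mathscr{C}_N$ accessible from $\pi$. *)

From HB Require Import structures.
From mathcomp Require Import all_boot all_order all_algebra.
Set Implicit Arguments. Unset Strict Implicit. Unset Printing Implicit Defensive.
Import GRing.Theory.
Local Open Scope ring_scope.

Section Series.
Variable K : comPzSemiRingType.

Definition series := nat -> K.

Definition szero : series := fun _ => 0.
Definition sone : series := fun n => if n is 0%N then 1 else 0.
Definition sconst (a : K) : series := fun n => if n is 0%N then a else 0.
Definition smonX (a : K) : series := fun n => if n == 1%N then a else 0.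
Definition sadd (f g : series) : series := fun n => f n + g n.
Definition smul (f g : series) : series :=
  fun n => \sum_(i < n.+1) f i * g (n - i)%N.
Definition spow (U : series) (k : nat) : series := iter k (smul U) sone.
(** U^* = (+)_{k>=0} U^k, for U with zero constant coefficient: the
    coefficient of X^n only receives contributions from k <= n. *)
Definition sstar (U : series) : series :=
  fun n => \sum_(k < n.+1) spow U k n.
Definition splus (U : series) : series := smul U (sstar U).

End Series.

Section Graph.
Variables (K : comPzSemiRingType) (N : nat).

(** Nodes of G_N : inl i is the node i (i in 1..N, encoded by 'I_N),
    inr false is the input node [in], inr true is the output node [out]. *)
Definition node := ('I_N + bool)%type.
Definition node_in : node := inr false.
Definition node_out : node := inr true.

Definition arc (u v : node) : bool :=
  match u, v with
  | inl _, inl _ => true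
  | inr false, inl _ => true
  | inl _, inr true => true
  | _, _ => false
  end.

Variables (A : 'M[K]_N) (b : 'cV[K]_N) (c : 'rV[K]_N).

(** weight of the arc u -> v (only meaningful when arc u v) *)
Definition arcw (u v : node) : series K :=
  match u, v with
  | inl j, inl i => smonX (A i j)
  | inr false, inl i => sconst (b i ord0)
  | inl i, inr true => sconst (c ord0 i)
  | _, _ => szero K
  end.

Definition path_arcs (p : seq node) : seq (node * node) := zip p (behead p).

Definition pathw (p : seq node) : series K :=
  \big[@smul K/sone K]_(e <- path_arcs p) arcw e.1 e.2.

Definition elem_path (p : seq node) : bool :=
  match p with
  | [::] => false
  | x :: p' => [&& x == node_in, path arc x p', last x p' == node_out & uniq p]
  end.

Definition circ_arcs (s : seq node) : seq (node * node) := zip s (rot 1 s).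

Definition elem_circ (s : seq node) : bool :=
  [&& s != [::], cycle arc s & uniq s].

(** A conjugacy class of elementary circuits is represented by its set of
    arcs (two elementary circuits are cyclic conjugates iff they have the same
    arc set). [circ_class E] : E is the arc set of an elementary circuit. *)
Definition circ_class (E : {set node * node}) : bool :=
  [exists n : 'I_(#|{: node}|.+1), exists t : n.-tuple node,
     elem_circ t && (E == [set e in circ_arcs t])].

(** weight of a conjugacy class = weight of any representative circuit
    = product of the weights of its (pairwise distinct) arcs *)
Definition circw (E : {set node * node}) : series K :=
  \big[@smul K/sone K]_(e in E) arcw e.1 e.2.

Definition verts (E : {set node * node}) : {set node} :=
  [set x | [exists e in E, (e.1 == x) || (e.2 == x)]].
Definition accessible (p : seq node) (C : {set {set node * node}}) : bool :=
  [forall E in C, circ_class E] &&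
  [forall x, forall y,
     let Etot := [set e in path_arcs p] :|: \bigcup_(E in C) E in
     (x \in verts Etot) ==> (y \in verts Etot) ==>
     connect (fun u v => ((u, v) \in Etot) || ((v, u) \in Etot)) x y].

(** S_N = c (A X)^* b = (+)_k c A^k b X^k *)
Definition S_N : series K := fun k => (c *m (A ^+ k) *m b) ord0 ord0.

(** right-hand side of the proposition; elementary paths have at most
    #|node| nodes, so summing over tuples of length n <= #|node| enumerates
    P_N exactly once. *)
Definition rhs : series K :=
  \big[@sadd K/szero K]_(n < #|{: node}|.+1)
   \big[@sadd K/szero K]_(t : n.-tuple node | elem_path t)
     smul (pathw t)
       (\big[@sadd K/szero K]_(C : {set {set node * node}} | accessible t C)
          \big[@smul K/sone K]_(E in C) splus (circw E)).

End Graph.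

(* The coefficient of X^n in c (A X)^* b = (+)_k c A^k b X^k is the sum of the
   weights of the walks from [in] to [out] with n inner arcs. Repeatedly cutting
   off a simple loop turns such a walk into an elementary path plus elementary
   circuits, every circuit being linked to the path through the union of all of
   them; conversely, an elementary path together with positive powers of an
   accessible set of circuits is spliced back into one walk, inserting each
   circuit at a node it shares with the walk built so far. The weight of a walk
   only depends on its multiset of arcs (commutativity), and with an idempotent
   sum each side is the sum of the set of weights it enumerates, so the two sides
   agree; truncating w(gamma)^+ after X^n loses nothing since circuits have
   positive degree. *)

From Pilot Require Import Defs.
From HB Require Import structures.
From mathcomp Require Import all_boot all_order all_algebra.
From Stdlib Require Import FunctionalExtensionality.
Import GRing.Theory.
Set Implicit Arguments. Unset Strict Implicit. Unset Printing Implicit Defensive.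

Lemma drop_zip (S T : Type) k (s : seq S) (t : seq T) :
  drop k (zip s t) = zip (drop k s) (drop k t).
Proof. by elim: k s t => [|k IH] [|x s] [|y t] //=; case: (drop _ _). Qed.

Lemma take_zip (S T : Type) k (s : seq S) (t : seq T) :
  take k (zip s t) = zip (take k s) (take k t).
Proof. by elim: k s t => [|k IH] [|x s] [|y t] //=; rewrite ?IH //; case: (take _ _). Qed.

Lemma rot_zip (S T : Type) k (s : seq S) (t : seq T) :
  size s = size t -> zip (rot k s) (rot k t) = rot k (zip s t).
Proof. by move=> st; rewrite /rot zip_cat ?size_drop ?st // drop_zip take_zip. Qed.

Definition ncat (T : Type) (s : seq T) k := flatten (nseq k s).

Lemma perm_ncat (T : eqType) (s1 s2 : seq T) k :
  perm_eq s1 s2 -> perm_eq (ncat s1 k) (ncat s2 k).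
Proof. by move=> s12; elim: k => [//|k IH] /=; apply: perm_cat. Qed.

Lemma count_ncat (T : Type) (a : pred T) (s : seq T) k :
  count a (ncat s k) = k * count a s.
Proof. by elim: k => [//|k IH] /=; rewrite count_cat IH mulSn. Qed.

Lemma all2_map (S T : Type) (r : S -> T -> bool) (f : S -> T) s :
  all2 r s (map f s) = all (fun x => r x (f x)) s.
Proof. by elim: s => //= x s ->. Qed.

Lemma perm_count_mem (T : eqType) (s1 s2 : seq T) :
  (forall x, count_mem x s1 = count_mem x s2) -> perm_eq s1 s2.
Proof. by move=> s12; apply/allP => x _; apply/eqP. Qed.

Lemma mem_big_cat (T : eqType) (I : Type) (r : seq I) (P : pred I)
    (F : I -> seq T) x :
  (x \in \big[cat/[::]]_(i <- r | P i) F i) = has (fun i => P i && (x \in F i)) r.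
Proof.
elim: r => [|i r IH]; first by rewrite big_nil.
by rewrite big_cons /=; case: (P i); rewrite ?mem_cat IH.
Qed.

(* Cutting at the first repeated element makes the loop [y :: q] simple. *)
Lemma nonuniq_split_loop (T : eqType) (s : seq T) : ~~ uniq s ->
  exists p y q r, s = p ++ y :: q ++ y :: r /\ uniq (y :: q).
Proof.
elim: s => [//|a s IH] /=; rewrite negb_and negbK.
have [us|nus _] := boolP (uniq s); last first.
  by have [p [y [q [r [-> uyq]]]]] := IH nus; exists (a :: p), y, q, r.
rewrite orbF => sa; move: us; case/splitPr: sa => q r.
rewrite cat_uniq => /and3P [uq /hasPn aq _]; exists [::], a, q, r; split => //=.
by rewrite uq andbT; apply: aq (mem_head _ _).
Qed.

Section PathArcs.
Variable N : nat.
Local Notation node := (node N).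
Local Notation arcs := (@path_arcs N).

Lemma path_arcs_cons (x : node) s :
  arcs (x :: s) = if s is z :: _ then (x, z) :: arcs s else [::].
Proof. by case: s. Qed.

Lemma path_arcs_cat (s1 : seq node) y s2 :
  arcs (s1 ++ y :: s2) = arcs (rcons s1 y) ++ arcs (y :: s2).
Proof.
elim: s1 => [//|x s1 IH] /=.
by rewrite path_arcs_cons [arcs (x :: rcons s1 y)]path_arcs_cons IH; case: s1 {IH}.
Qed.

Lemma path_arcs_cat_loop (s1 : seq node) y s r :
  arcs (s1 ++ y :: s ++ y :: r) =
  arcs (rcons s1 y) ++ arcs (y :: rcons s y) ++ arcs (y :: r).
Proof. by rewrite path_arcs_cat -cat_cons path_arcs_cat. Qed.

Lemma path_arcs_rcons (x : node) s y :
  arcs (x :: rcons s y) = rcons (arcs (x :: s)) (last x s, y).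
Proof. by elim: s x => [//|z s IH] x /=; rewrite path_arcs_cons IH. Qed.

Lemma mem_path_arcs (s : seq node) u v :
  (u, v) \in arcs s -> (u \in s) && (v \in s).
Proof.
elim: s => [//|x s IH]; rewrite path_arcs_cons.
case: s IH => [//|z s] IH; rewrite in_cons => /orP [/eqP [-> ->]|/IH /andP [us vs]].
  by rewrite !in_cons !eqxx orbT.
by rewrite (in_cons x _ u) (in_cons x _ v) us vs !orbT.
Qed.

Lemma path_all_arcs (e : rel node) x p :
  path e x p = all (fun a => e a.1 a.2) (arcs (x :: p)).
Proof. by elim: p x => [//|z p IH] x /=; rewrite IH. Qed.

Lemma connect_path_arcs (e : rel node) x p :
  (forall a, a \in arcs (x :: p) -> e a.1 a.2) ->
  forall y, y \in x :: p -> connect e x y.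
Proof.
elim: p x => [|z p IH] x eP y.
  by rewrite mem_seq1 => /eqP ->; apply: connect0.
rewrite in_cons => /orP [/eqP ->|yp]; first exact: connect0.
apply: (connect_trans (connect1 (eP (x, z) _))); first by rewrite mem_head.
by apply: IH => // a ap; apply: eP; rewrite path_arcs_cons in_cons ap orbT.
Qed.

Lemma circ_arcs_cons (x : node) s : circ_arcs (x :: s) = arcs (x :: rcons s x).
Proof.
rewrite /circ_arcs rot1_cons /path_arcs /=.
elim: s x {1 3}x => [//|z s IH] x y /=.
by rewrite IH.
Qed.

Lemma perm_circ_arcs_rot k (s : seq node) :
  perm_eq (circ_arcs (rot k s)) (circ_arcs s).
Proof. by rewrite /circ_arcs rot_rot rot_zip ?size_rot // perm_rot. Qed.

Lemma mem_circ_arcs (s : seq node) u v :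
  (u, v) \in circ_arcs s -> (u \in s) && (v \in s).
Proof.
case: s => [//|x s]; rewrite circ_arcs_cons => /mem_path_arcs.
rewrite !in_cons !mem_rcons !in_cons.
by case/andP=> /orP[->|->] /orP[->|->]; rewrite ?orbT.
Qed.

Lemma circ_arcs_uniq (s : seq node) : uniq s -> uniq (circ_arcs s).
Proof. exact: zip_uniql. Qed.

Lemma circ_arcs_out (s : seq node) y :
  y \in s -> exists z, (y, z) \in circ_arcs s.
Proof.
move=> ys; exists (nth y (rot 1 s) (index y s)).
have <- : nth (y, y) (circ_arcs s) (index y s) = (y, nth y (rot 1 s) (index y s)).
  by rewrite /circ_arcs nth_zip ?size_rot // nth_index.
by apply: mem_nth; rewrite /circ_arcs size_zip size_rot minnn index_mem.
Qed.

End PathArcs.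

Section Walks.
Variable N : nat.
Local Notation node := (node N).
Local Notation arcs := (@path_arcs N).
Local Notation nin := (node_in N).
Local Notation nout := (node_out N).
Local Notation arc := (@Defs.arc N).

Definition walk (w : seq node) :=
  [&& head nout w == nin, last nin w == nout & all (fun a => arc a.1 a.2) (arcs w)].

Lemma walk_cons x p :
  walk (x :: p) = [&& x == nin, last x p == nout & path arc x p].
Proof. by rewrite /walk path_all_arcs. Qed.

Lemma elem_path_walk (t : seq node) : elem_path t = walk t && uniq t.
Proof. by case: t => [//|x p]; rewrite walk_cons /= -!andbA; do !bool_congr. Qed.

Lemma arc_to_in (u : node) : arc u nin = false.
Proof. by case: u => [?|[]]. Qed.

Lemma arc_from_out (v : node) : arc nout v = false.
Proof. by case: v. Qed.

(* Only the arcs between inner nodes carry the variable X. *)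
Definition xdeg (l : seq (node * node)) : nat :=
  \sum_(a <- l) if a is (inl _, inl _) then 1 else 0.

Lemma xdeg_cat l1 l2 : xdeg (l1 ++ l2) = xdeg l1 + xdeg l2.
Proof. by rewrite /xdeg big_cat. Qed.

Lemma xdeg_perm l1 l2 : perm_eq l1 l2 -> xdeg l1 = xdeg l2.
Proof. by move=> l12; rewrite /xdeg (perm_big _ l12). Qed.

Lemma elem_circ_inner (g : seq node) x :
  elem_circ g -> x \in g -> exists j, x = inl j.
Proof.
case/and3P=> _ cg _ xg.
move: (next_cycle cg xg) (prev_cycle cg xg).
by case: x {xg} => [j|[]]; [exists j | rewrite arc_from_out | rewrite arc_to_in].
Qed.

Lemma xdeg_circ_arcs_gt0 (g : seq node) : elem_circ g -> 0 < xdeg (circ_arcs g).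
Proof.
move=> eg; case: g eg => [//|x s] eg.
have [z xz] := circ_arcs_out (mem_head x s).
have /andP [_ zg] := mem_circ_arcs xz.
have [j ex] := elem_circ_inner eg (mem_head x s); have [i ez] := elem_circ_inner eg zg.
by rewrite /xdeg (big_rem _ xz) /= ex ez.
Qed.

Lemma circ_class_circ_arcs (g : seq node) :
  elem_circ g -> circ_class [set e in circ_arcs g].
Proof.
move=> eg; have ug : uniq g by case/and3P: eg.
have sg : size g < #|{: node}|.+1 by rewrite ltnS -(card_uniqP ug) max_card.
apply/existsP; exists (Ordinal sg); apply/existsP; exists (in_tuple g).
by rewrite /= eg eqxx.
Qed.

Lemma walk_cut_circuit (w : seq node) : walk w -> ~~ uniq w ->
  exists w' g, [/\ walk w', elem_circ g,
    perm_eq (arcs w) (arcs w' ++ circ_arcs g) & size w' < size w].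
Proof.
move=> ww /nonuniq_split_loop [p [y [q [r [ew uyq]]]]].
move: ww; rewrite {}ew /walk path_arcs_cat_loop !all_cat.
case/and3P=> hw lw /and3P [ap aq ar].
exists (p ++ y :: r), (y :: q); rewrite path_arcs_cat all_cat ap ar andbT; split.
- rewrite andbT; apply/andP; split; last by rewrite !last_cat /= last_cat in lw *.
  by case: p {ap lw} hw.
- by apply/and3P; split => //=; rewrite path_all_arcs.
- by rewrite circ_arcs_cons -catA perm_cat2l perm_catC.
- by rewrite !size_cat /= size_cat /= ltn_add2l ltnS leq_addl.
Qed.

Lemma walk_decomposition (w : seq node) : walk w ->
  exists t (k : {set node * node} -> nat),
  [/\ elem_path t, forall E, 0 < k E -> circ_class E,
      forall E, k E <= xdeg (arcs w),
      forall e, count_mem e (arcs w) =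
                count_mem e (arcs t) + \sum_E k E * (e \in E)
    & [set e in arcs w] = [set e in arcs t] :|: \bigcup_(E | 0 < k E) E].
Proof.
elim: {w}(size w) {-2}w (leqnn (size w)) => [|n IH] w sw ww.
  by move: sw ww; rewrite leqn0 => /nilP ->.
have [uw|nuw] := boolP (uniq w).
  exists w, (fun _ => 0); split => // [|e|]; first by rewrite elem_path_walk ww.
    by rewrite big1 ?addn0.
  by rewrite big_pred0 ?setU0.
have [w' [g [ww' eg perm_w sw']]] := walk_cut_circuit ww nuw.
have [t [k [et kC kdeg kcount kset]]] := IH w' (leq_trans sw' sw) ww'.
set E0 := [set e in circ_arcs g].
have xdeg_w : xdeg (arcs w) = xdeg (arcs w') + xdeg (circ_arcs g).
  by rewrite (xdeg_perm perm_w) xdeg_cat.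
exists t, (fun E => k E + (E == E0)); split => //.
- move=> E; have [-> _|_] := eqVneq E E0; first exact: circ_class_circ_arcs.
  by rewrite addn0; apply: kC.
- move=> E; rewrite xdeg_w leq_add ?kdeg //.
  by case: (E == E0); rewrite ?xdeg_circ_arcs_gt0.
- move=> e; rewrite (permP perm_w) count_cat kcount -addnA; congr (_ + _).
  under [RHS]eq_bigr do rewrite mulnDl.
  rewrite big_split /=; congr (_ + _).
  rewrite (bigD1 E0) //= eqxx mul1n big1 ?addn0 => [|E /negbTE -> //].
  by rewrite count_uniq_mem ?circ_arcs_uniq ?inE //; case/and3P: eg.
have -> : [set e in arcs w] = [set e in arcs w'] :|: E0.
  by apply/setP => e; rewrite !inE (perm_mem perm_w) mem_cat.
rewrite kset -setUA; congr (_ :|: _); apply/setP => e; rewrite in_setU.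
apply/orP/bigcupP => [[/bigcupP [E kE eE]|eE0]|[E kE eE]].
- by exists E; rewrite ?(leq_trans kE) ?leq_addr.
- by exists E0; rewrite ?eqxx ?addn1.
case: (eqVneq E E0) => [EE0|nE]; first by right; rewrite -EE0.
by left; apply/bigcupP; exists E => //; move: kE; rewrite (negbTE nE) addn0.
Qed.

End Walks.

(* If no circuit met [w], the nodes of [w] would be closed under [R]. *)
Lemma connected_circuit_meets (T : finType) (R : rel T) (w : seq T)
    (cs : seq (seq T)) g0 y :
  g0 \in cs -> y \in g0 ->
  (forall u v, R u v ->
     (u \in w) && (v \in w) \/ exists2 g, g \in cs & (u \in g) && (v \in g)) ->
  (forall g, g \in cs -> forall y, y \in g -> exists2 x, x \in w & connect R x y) ->
  exists2 g, g \in cs & has (mem w) g.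
Proof.
move=> g0cs yg0 Rin conn; apply/hasP; apply/negPn/negP => /hasPn far.
have wR : closed R (mem w).
  move=> u v /Rin [/andP [-> ->] //|[g gcs /andP [ug vg]]].
  have /hasPn gw := far g gcs.
  have uw : u \notin w by apply: gw.
  have vw : v \notin w by apply: gw.
  by rewrite (negbTE uw) (negbTE vw).
have [x xw xy] := conn g0 g0cs y yg0.
by have /hasPn/(_ y yg0) := far g0 g0cs; rewrite /= -(closed_connect wR xy) xw.
Qed.

Section Splicing.
Variable N : nat.
Local Notation node := (node N).
Local Notation arcs := (@path_arcs N).
Local Notation arc := (@Defs.arc N).

Lemma splice_loop (p : seq node) z r s :
  walk (p ++ z :: r) -> path arc z (rcons s z) ->
  walk (p ++ z :: s ++ z :: r) /\
  perm_eq (arcs (p ++ z :: s ++ z :: r)) (arcs (p ++ z :: r) ++ arcs (z :: rcons s z)).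
Proof.
rewrite /walk path_arcs_cat_loop !path_arcs_cat !all_cat path_all_arcs.
case/and3P=> hw lw /andP [ap ar] cs; split.
  rewrite ap cs ar !andbT; apply/andP; split; first by case: p {ap lw} hw.
  by rewrite !last_cat /= last_cat in lw *.
by rewrite -catA perm_cat2l perm_catC.
Qed.

Lemma circuit_rot_at (g : seq node) z : elem_circ g -> z \in g ->
  exists s, [/\ path arc z (rcons s z), perm_eq (arcs (z :: rcons s z)) (circ_arcs g)
              & z :: s =i g].
Proof.
case/and3P=> _ + _ zg; case/splitPr: zg => a b cg; exists (b ++ a).
have rotE : rot (size a) (a ++ z :: b) = z :: (b ++ a) by rewrite rot_size_cat.
split.
- by move: cg; rewrite -(rot_cycle (size a)) rotE.
- by rewrite -circ_arcs_cons -rotE perm_circ_arcs_rot.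
- by move=> x; rewrite -rotE mem_rot.
Qed.

Lemma splice_circuits (R : rel node) (cs : seq (seq node)) (w : seq node) :
  walk w -> all (@elem_circ N) cs ->
  (forall u v, R u v ->
     (u \in w) && (v \in w) \/ exists2 g, g \in cs & (u \in g) && (v \in g)) ->
  (forall g, g \in cs -> forall y, y \in g -> exists2 x, x \in w & connect R x y) ->
  exists w', walk w' /\ perm_eq (arcs w') (arcs w ++ flatten (map (@circ_arcs N) cs)).
Proof.
elim: {cs}(size cs) {-2}cs (leqnn (size cs)) w => [|n IH] cs scs w ww ecs Rin conn.
  by exists w; move: scs; rewrite leqn0 => /nilP ->; rewrite cats0.
have [->|[g gcs /hasP [z zg zw]]] : cs = [::] \/ exists2 g, g \in cs & has (mem w) g.
  case: cs ecs Rin conn {scs} => [|[|y g0] cs'] //; [by left | move=> ecs Rin conn; right].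
  exact: connected_circuit_meets (mem_head _ _) (mem_head _ _) Rin conn.
  by exists w; rewrite cats0.
have [s [zs perm_s gs]] := circuit_rot_at (allP ecs g gcs) zg.
have perm_cs := perm_to_rem gcs.
move: ww Rin conn; case/splitPr: zw => p r ww Rin conn.
have [ww1 perm1] := splice_loop ww zs.
have sub_w : {subset p ++ z :: r <= p ++ z :: s ++ z :: r}.
  move=> x; rewrite !mem_cat !in_cons mem_cat in_cons.
  by case/or3P=> ->; rewrite ?orbT.
have sub_g : {subset g <= p ++ z :: s ++ z :: r}.
  by move=> x; rewrite -gs mem_cat !in_cons mem_cat => /orP [->|->]; rewrite ?orbT.
have [||||w' [ww' perm']] := IH (rem g cs) _ (p ++ z :: s ++ z :: r) ww1.
- by move: scs; rewrite size_rem //; case: (size cs).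
- by apply/allP => g' /mem_rem; apply: (allP ecs).
- move=> u v /Rin [/andP [uw vw]|[g' g'cs /andP [ug' vg']]].
    by left; rewrite !sub_w.
  have [eg|ng] := eqVneq g' g; first by left; rewrite !sub_g -?eg.
  right; exists g' => //; last by rewrite ug' vg'.
  by move: g'cs; rewrite (perm_mem perm_cs) in_cons (negbTE ng).
- move=> g' /mem_rem g'cs y yg'; have [x xw xy] := conn g' g'cs y yg'.
  by exists x; rewrite ?sub_w.
exists w'; split => //; apply: perm_trans perm' _.
apply: perm_trans (perm_cat perm1 (perm_refl _)) _; rewrite -catA perm_cat2l.
apply: perm_trans (perm_cat perm_s (perm_refl _)) _; rewrite perm_sym.
exact: perm_flatten (perm_map _ perm_cs).
Qed.

End Splicing.

Section WalkWords.
Variable N : nat.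
Local Notation node := (node N).
Local Notation arcs := (@path_arcs N).
Local Notation nin := (node_in N).
Local Notation nout := (node_out N).
Local Notation arc := (@Defs.arc N).
Local Notation xdeg := (@xdeg N).
Local Notation word := (seq (node * node)).

(* The arc words of the walks from [in] to the inner node [i] with [m] inner arcs,
   following the expansion of [A^m b]. *)
Fixpoint inner_walk_words m (i : 'I_N) : seq word :=
  if m is m'.+1 then
    \big[cat/[::]]_(j : 'I_N) [seq rcons l (inl j, inl i) | l <- inner_walk_words m' j]
  else [:: [:: (nin, inl i)]].

Definition walk_words n : seq word :=
  \big[cat/[::]]_(i : 'I_N) [seq rcons l (inl i, nout) | l <- inner_walk_words n i].

Definition walk_of (s : seq 'I_N) : seq node := nin :: rcons (map inl s) nout.

Lemma inner_walk_wordsP m i l :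
  reflect (exists2 s, size s = m & l = arcs (nin :: map inl (rcons s i)))
          (l \in inner_walk_words m i).
Proof.
elim: m i l => [|m IH] i l /=.
  rewrite mem_seq1; apply: (iffP eqP) => [->|[s /size0nil -> ->]] //.
  by exists [::].
rewrite mem_big_cat; apply: (iffP hasP) => [[j _ /mapP [l' /IH [s sm ->] ->]]|].
  exists (rcons s j); first by rewrite size_rcons sm.
  by rewrite [in RHS]map_rcons path_arcs_rcons map_rcons last_rcons.
case=> s; case/lastP: s => [//|s j]; rewrite size_rcons => -[sm] ->.
exists j; first exact: mem_index_enum.
rewrite map_rcons path_arcs_rcons map_rcons last_rcons -map_rcons.
by apply: map_f; apply/IH; exists s.
Qed.

Lemma walk_wordsP n l :
  reflect (exists s i, size s = n /\ l = arcs (walk_of (rcons s i)))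
          (l \in walk_words n).
Proof.
rewrite mem_big_cat; apply: (iffP hasP) => [[i _ /mapP [l' /inner_walk_wordsP [s sn ->] ->]]|].
  by exists s, i; rewrite /walk_of path_arcs_rcons map_rcons last_rcons.
case=> s [i [sn ->]]; exists i; first exact: mem_index_enum.
rewrite /walk_of path_arcs_rcons map_rcons last_rcons -map_rcons.
by apply: map_f; apply/inner_walk_wordsP; exists s.
Qed.

Lemma xdeg_walk_of s i : xdeg (arcs (walk_of (rcons s i))) = size s.
Proof.
rewrite /walk_of path_arcs_rcons map_rcons last_rcons -cats1 xdeg_cat /xdeg big_seq1 addn0.
elim/last_ind: s i => [|s j IH] i; first by rewrite big_seq1.
by rewrite map_rcons path_arcs_rcons -cats1 big_cat IH big_seq1 last_rcons size_rcons /= addn1.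
Qed.

Lemma walk_walk_of s i : walk (walk_of (rcons s i)).
Proof.
rewrite /walk_of walk_cons /= last_rcons eqxx /= rcons_path.
have inner x s' : x != nout -> path arc x (map inl s').
  by elim: s' x => [//|j s' IHs] x xo /=; rewrite IHs // andbT; case: x xo => [?|[]].
by rewrite inner // map_rcons last_rcons.
Qed.

Lemma walk_shape (w : seq node) : walk w -> exists s i, w = walk_of (rcons s i).
Proof.
case: w => [//|x p]; rewrite walk_cons => /and3P [/eqP -> lp pp].
suff [s ps] : exists s, p = rcons (map inl s) nout.
  by move: pp; rewrite {}ps; case/lastP: s => [|s i] //= _; exists s, i.
elim: p (nin) (isT : nin != nout) lp pp => [|y p IH] v vo /=; first by rewrite (negbTE vo).
move=> ly /andP [vy yp]; case: p IH ly yp => [|z p] IH ly yp.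
  by move: ly => /= /eqP ->; exists [::].
have yo : y != nout by case: y vy yp {IH ly} => [?|[]] //= _; rewrite arc_from_out.
have [s ps] := IH y yo ly yp.
case: y vy yp yo ly ps => [j|[]] // vy; last by rewrite arc_to_in in vy.
by move=> _ _ _ ps; exists (j :: s); rewrite ps.
Qed.

Lemma walk_words_walk n l :
  l \in walk_words n -> exists2 w, walk w & l = arcs w /\ xdeg l = n.
Proof.
case/walk_wordsP => s [i [sn ->]]; exists (walk_of (rcons s i)).
  exact: walk_walk_of.
by rewrite xdeg_walk_of.
Qed.

Lemma walk_arcs_in_walk_words w : walk w -> arcs w \in walk_words (xdeg (arcs w)).
Proof.
case/walk_shape=> s [i ->]; rewrite xdeg_walk_of.
by apply/walk_wordsP; exists s, i.
Qed.

End WalkWords.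

Section TruncatedSeries.
Variable K : comPzSemiRingType.
Local Open Scope ring_scope.

Definition agree_upto n (f g : series K) := forall m, (m <= n)%N -> f m = g m.

Lemma agree_upto_add n f f' g g' :
  agree_upto n f f' -> agree_upto n g g' -> agree_upto n (sadd f g) (sadd f' g').
Proof. by move=> ff' gg' m mn; rewrite /sadd ff' // gg'. Qed.

Lemma agree_upto_mul n f f' g g' :
  agree_upto n f f' -> agree_upto n g g' -> agree_upto n (smul f g) (smul f' g').
Proof.
move=> ff' gg' m mn; apply: eq_bigr => i _.
have im : (i <= m)%N by rewrite -ltnS.
by rewrite ff' ?(leq_trans im) // gg' // (leq_trans (leq_subr _ _)).
Qed.

Lemma agree_upto_big_add n (I : Type) (r : seq I) (P : pred I) (F G : I -> series K) :
  (forall i, P i -> agree_upto n (F i) (G i)) ->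
  agree_upto n (\big[@sadd K/szero K]_(i <- r | P i) F i)
               (\big[@sadd K/szero K]_(i <- r | P i) G i).
Proof. by move=> FG; apply: (big_ind2 (agree_upto n)) => //; apply: agree_upto_add. Qed.

Lemma agree_upto_big_mul n (I : Type) (r : seq I) (P : pred I) (F G : I -> series K) :
  (forall i, P i -> agree_upto n (F i) (G i)) ->
  agree_upto n (\big[@smul K/sone K]_(i <- r | P i) F i)
               (\big[@smul K/sone K]_(i <- r | P i) G i).
Proof. by move=> FG; apply: (big_ind2 (agree_upto n)) => //; apply: agree_upto_mul. Qed.

End TruncatedSeries.

Lemma mul_if0 (R : pzSemiRingType) (a b : bool) (x y : R) :
  ((if a then x else 0) * (if b then y else 0) = if a && b then x * y else 0)%R.
Proof. by case: a; case: b; rewrite ?mul0r ?mulr0. Qed.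

Definition catpairs (T : Type) (s t : seq (seq T)) := [seq x ++ y | x <- s, y <- t].

Section WordSeries.
Variable K : comPzSemiRingType.
Local Open Scope ring_scope.
Variable N : nat.
Variables (A : 'M[K]_N) (b : 'cV[K]_N) (c : 'rV[K]_N).
Local Notation node := (node N).
Local Notation arcs := (@path_arcs N).
Local Notation xdeg := (@xdeg N).
Local Notation word := (seq (node * node)).

Definition arc_coef (e : node * node) : K :=
  match e with
  | (inl j, inl i) => A i j
  | (inr false, inl i) => b i ord0
  | (inl i, inr true) => c ord0 i
  | _ => 0
  end.

Definition word_coef (l : word) : K := \prod_(e <- l) arc_coef e.

(* Every series of the statement is the generating series of a list of words,
   a word of arcs [l] contributing [word_coef l X^(xdeg l)]. *)
Definition word_series (s : seq word) : series K :=
  fun n => \sum_(l <- s | xdeg l == n) word_coef l.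

Lemma word_coef_cat l1 l2 : word_coef (l1 ++ l2) = word_coef l1 * word_coef l2.
Proof. by rewrite /word_coef big_cat. Qed.

Lemma word_coef_perm l1 l2 : perm_eq l1 l2 -> word_coef l1 = word_coef l2.
Proof. by move=> l12; rewrite /word_coef (perm_big _ l12). Qed.

Lemma word_series1 l n :
  word_series [:: l] n = if xdeg l == n then word_coef l else 0.
Proof. by rewrite /word_series big_cons big_nil; case: ifP => _; rewrite ?addr0. Qed.

Lemma arcw_word_series (u v : node) : arcw A b c u v = word_series [:: [:: (u, v)]].
Proof.
apply: functional_extensionality => n.
rewrite word_series1 /word_coef /xdeg !big_seq1.
by case: u => [j|[]]; case: v => [i|[]] /=; rewrite /szero /sconst /smonX; case: n => [|[|n]].
Qed.

Lemma word_series_nil : szero K = word_series [::].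
Proof. by apply: functional_extensionality => n; rewrite /word_series big_nil. Qed.

Lemma word_series_one : sone K = word_series [:: [::]].
Proof.
apply: functional_extensionality => n.
by rewrite word_series1 /xdeg /word_coef !big_nil; case: n.
Qed.

Lemma word_series_cat s t : sadd (word_series s) (word_series t) = word_series (s ++ t).
Proof. by apply: functional_extensionality => n; rewrite /sadd /word_series big_cat. Qed.

Lemma word_series_catpairs s t :
  smul (word_series s) (word_series t) = word_series (catpairs s t).
Proof.
apply: functional_extensionality => n.
rewrite /smul /word_series [RHS]big_mkcond big_allpairs_dep /=.
under eq_bigr do rewrite big_mkcond mulr_suml.
rewrite exchange_big /=; apply: eq_bigr => x _.
under eq_bigr do rewrite big_mkcond mulr_sumr.
rewrite exchange_big /=; apply: eq_bigr => y _.
rewrite xdeg_cat word_coef_cat.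
under eq_bigr => i _ do rewrite mul_if0 andbC [xdeg x == _]eq_sym.
rewrite -big_mkcond.
rewrite (big_ord1_cond_eq _ (fun=> word_coef x * word_coef y) (fun j => xdeg y == (n - j)%N)).
rewrite ltnS; congr (if _ then _ else _).
case: leqP => [xn|nx] /=; first by rewrite -(eqn_add2l (xdeg x)) subnKC.
by rewrite eqn_leq leqNgt (leq_trans nx) ?leq_addr.
Qed.

Lemma word_series_big_cat (I : Type) (r : seq I) (P : pred I) (F : I -> seq word) :
  word_series (\big[cat/[::]]_(i <- r | P i) F i) =
  \big[@sadd K/szero K]_(i <- r | P i) word_series (F i).
Proof.
apply: (big_morph word_series) => [x y|]; last exact: esym word_series_nil.
by rewrite word_series_cat.
Qed.

Lemma word_series_big_catpairs (I : Type) (r : seq I) (P : pred I) (F : I -> seq word) :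
  word_series (\big[@catpairs _/[:: [::]]]_(i <- r | P i) F i) =
  \big[@smul K/sone K]_(i <- r | P i) word_series (F i).
Proof.
apply: (big_morph word_series) => [x y|]; last exact: esym word_series_one.
by rewrite word_series_catpairs.
Qed.

Lemma big_catpairs_singletons (r : word) (P : pred (node * node)) :
  \big[@catpairs _/[:: [::]]]_(e <- r | P e) [:: [:: e]] = [:: [seq e <- r | P e]].
Proof. by elim: r => [|e r IH]; rewrite ?big_nil // big_cons /=; case: (P e); rewrite IH. Qed.

Lemma pathw_word_series (t : seq node) : pathw A b c t = word_series [:: arcs t].
Proof.
rewrite /pathw (eq_bigr (fun e => word_series [:: [:: e]])) => [|[u v] _]; last first.
  exact: arcw_word_series.
by rewrite -word_series_big_catpairs big_catpairs_singletons filter_predT.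
Qed.

Definition class_arcs (E : {set node * node}) : word := [seq e <- index_enum _ | e \in E].

Lemma circw_word_series (E : {set node * node}) :
  circw A b c E = word_series [:: class_arcs E].
Proof.
rewrite /circw (eq_bigr (fun e => word_series [:: [:: e]])) => [|[u v] _]; last first.
  exact: arcw_word_series.
by rewrite -word_series_big_catpairs big_catpairs_singletons.
Qed.

Lemma xdeg_ncat (l : word) k : xdeg (ncat l k) = (k * xdeg l)%N.
Proof. by elim: k => [|k IH] /=; rewrite ?xdeg_cat ?IH ?mulSn // /xdeg big_nil. Qed.

Lemma spow_word_series l k : spow (word_series [:: l]) k = word_series [:: ncat l k].
Proof.
elim: k => [|k IH]; first exact: word_series_one.
by rewrite /spow /= -/(spow _ k) IH word_series_catpairs.
Qed.

(* Since [l] has positive degree, only the powers [l^k] with [k <= n] reach [X^n]. *)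
Lemma sstar_agree l n : (0 < xdeg l)%N ->
  agree_upto n (sstar (word_series [:: l]))
               (word_series [seq ncat l k | k <- iota 0 n.+1]).
Proof.
move=> l_gt0 m mn; rewrite /sstar.
under eq_bigr do rewrite spow_word_series word_series1.
rewrite /word_series big_map -big_mkcond /=.
rewrite -(big_mkord (fun k => xdeg (ncat l k) == m) (fun k => word_coef (ncat l k))).
rewrite (big_nat_widen _ _ _ _ _ (mn : (m.+1 <= n.+1)%N)) /index_iota subn0.
apply: eq_bigl => k; case: eqP => //= <-.
by rewrite ltnS xdeg_ncat -{1}(muln1 k) leq_mul2l l_gt0 orbT.
Qed.

Lemma splus_agree l n : (0 < xdeg l)%N ->
  agree_upto n (splus (word_series [:: l]))
               (word_series [seq ncat l k.+1 | k <- iota 0 n.+1]).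
Proof.
move=> l_gt0 m mn.
rewrite /splus (agree_upto_mul (fun _ _ => erefl) (sstar_agree (n:=n) l_gt0) mn).
by rewrite word_series_catpairs /catpairs /= !cats0 -map_comp /ncat /= cats0.
Qed.

Definition class_powers n (E : {set node * node}) : seq word :=
  [seq ncat (class_arcs E) k.+1 | k <- iota 0 n.+1].

(* The words of the right-hand side, with each [w(gamma)^+] truncated after [X^n]. *)
Definition rhs_words n : seq word :=
  \big[cat/[::]]_(n' < #|{: node}|.+1)
   \big[cat/[::]]_(t : n'.-tuple node | elem_path t)
     catpairs [:: arcs t]
       (\big[cat/[::]]_(C : {set {set node * node}} | accessible t C)
          \big[@catpairs _/[:: [::]]]_(E in C) class_powers n E).

Lemma perm_class_arcs (g : seq node) :
  uniq g -> perm_eq (class_arcs [set e in circ_arcs g]) (circ_arcs g).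
Proof.
move=> ug; apply: uniq_perm; rewrite ?circ_arcs_uniq ?filter_uniq ?index_enum_uniq //.
by move=> e; rewrite mem_filter mem_index_enum andbT inE.
Qed.

Lemma circ_classP (E : {set node * node}) :
  circ_class E -> exists2 g, elem_circ g & E = [set e in circ_arcs g].
Proof. by case/existsP => n0 /existsP [t /andP [et /eqP ->]]; exists t. Qed.

Lemma xdeg_class_arcs_gt0 (E : {set node * node}) :
  circ_class E -> (0 < xdeg (class_arcs E))%N.
Proof.
case/circ_classP => g eg ->; have ug : uniq g by case/and3P: eg.
by rewrite (xdeg_perm (perm_class_arcs ug)) xdeg_circ_arcs_gt0.
Qed.

Lemma rhs_agree n : agree_upto n (rhs A b c) (word_series (rhs_words n)).
Proof.
rewrite /rhs /rhs_words word_series_big_cat; apply: agree_upto_big_add => n' _.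
rewrite word_series_big_cat; apply: agree_upto_big_add => t _.
rewrite -word_series_catpairs pathw_word_series; apply: agree_upto_mul => //.
rewrite word_series_big_cat; apply: agree_upto_big_add => C /andP [/forallP CC _].
rewrite word_series_big_catpairs; apply: agree_upto_big_mul => E EC.
by rewrite circw_word_series; apply/splus_agree/xdeg_class_arcs_gt0/(implyP (CC E)).
Qed.

Lemma big_big_cat (I : Type) (r : seq I) (P : pred I) (F : I -> seq word) (G : word -> K) :
  \sum_(l <- \big[cat/[::]]_(i <- r | P i) F i) G l = \sum_(i <- r | P i) \sum_(l <- F i) G l.
Proof.
by apply: (big_morph (fun s => \sum_(l <- s) G l)) => [x y|]; rewrite ?big_cat ?big_nil.
Qed.

Lemma inner_walk_words_coef m i :
  (A ^+ m *m b) i ord0 = \sum_(l <- inner_walk_words m i) word_coef l.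
Proof.
elim: m i => [|m IH] i; first by rewrite expr0 mul1mx /= big_seq1 /word_coef big_seq1.
rewrite exprS -mulmxE -mulmxA mxE /= big_big_cat; apply: eq_bigr => j _.
rewrite IH big_map mulr_sumr; apply: eq_bigr => l _.
by rewrite /word_coef big_rcons /= mulrC.
Qed.

Lemma S_N_walk_words n : S_N A b c n = \sum_(l <- walk_words N n) word_coef l.
Proof.
rewrite /S_N -mulmxA mxE big_big_cat; apply: eq_bigr => i _.
rewrite inner_walk_words_coef big_map mulr_sumr; apply: eq_bigr => l _.
by rewrite /word_coef big_rcons /= mulrC.
Qed.

End WordSeries.

Lemma big_catpairsP (T : eqType) (I : Type) (r : seq I) (F : I -> seq (seq T)) y :
  reflect (exists2 ls, all2 (fun i l => l \in F i) r ls & y = flatten ls)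
          (y \in \big[@catpairs T/[:: [::]]]_(i <- r) F i).
Proof.
elim: r y => [|i r IH] y.
  rewrite big_nil mem_seq1; apply: (iffP eqP) => [->|[[|l ls] //= _ ->//]].
  by exists [::].
rewrite big_cons; apply: (iffP allpairsP) => [[[x z] [/= xF /IH [ls lsr ->] ->]]|].
  by exists (x :: ls); rewrite /= ?xF.
case=> [[|l ls] //= /andP [lF lsr] ->]; exists (l, flatten ls) => /=.
by split => //; apply/IH; exists ls.
Qed.

Section Correspondence.
Variable N : nat.
Local Notation node := (node N).
Local Notation arcs := (@path_arcs N).
Local Notation nin := (node_in N).
Local Notation xdeg := (@xdeg N).
Local Notation word := (seq (node * node)).

Lemma rhs_wordsP n l :
  reflect (exists t C ls, [/\ elem_path t, accessible t C,
             all2 (fun E l => l \in class_powers n E) [seq E <- index_enum _ | E \in C] ls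
           & l = arcs t ++ flatten ls])
          (l \in rhs_words N n).
Proof.
rewrite /rhs_words mem_big_cat; apply: (iffP hasP) => [[n' _]|[t [C [ls [et aC lsC ->]]]]].
  rewrite mem_big_cat => /hasP [t _ /andP [et /allpairsP [[x y] [/= + + ->]]]].
  rewrite mem_seq1 => /eqP -> {x}; rewrite mem_big_cat => /hasP [C _ /andP [aC]].
  by rewrite -big_filter => /big_catpairsP [ls lsC ->]; exists t, C, ls.
have ut : uniq t by move: et; rewrite elem_path_walk => /andP [].
have st : size t < #|{: node}|.+1 by rewrite ltnS -(card_uniqP ut) max_card.
exists (Ordinal st); first exact: mem_index_enum.
rewrite mem_big_cat; apply/hasP; exists (in_tuple t); first exact: mem_index_enum.
rewrite /= et; apply: allpairs_f; first exact: mem_head.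
rewrite mem_big_cat; apply/hasP; exists C; first exact: mem_index_enum.
by rewrite aC -big_filter; apply/big_catpairsP; exists ls.
Qed.

Lemma path_arcs_connected (s : seq node) x y :
  let E := [set e in arcs s] in
  x \in verts E -> y \in verts E ->
  connect (fun u v => ((u, v) \in E) || ((v, u) \in E)) x y.
Proof.
case: s => [|x0 p] E; first by rewrite inE => /existsP [e]; rewrite inE.
set R : rel node := fun u v => _.
have Es z : z \in verts E -> z \in x0 :: p.
  rewrite inE => /existsP [[u v]]; rewrite inE /=.
  by case/andP => /mem_path_arcs /andP [up vp] /orP [/eqP <-|/eqP <-].
have x0R z : z \in x0 :: p -> connect R x0 z.
  by apply: connect_path_arcs => -[u v] uv; rewrite /R inE uv.
have symR : connect_sym R by apply: sym_connect_sym => u v; rewrite /R orbC.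
move=> /Es xs /Es ys; apply: (connect_trans (y := x0)); last exact: x0R.
by rewrite symR; apply: x0R.
Qed.

Lemma walk_perm_rhs_word n w : walk w -> xdeg (arcs w) = n ->
  exists2 l, l \in rhs_words N n & perm_eq (arcs w) l.
Proof.
move=> ww wn; have [t [k [et kC kw kcount kset]]] := walk_decomposition ww.
set C := [set E | 0 < k E]; set r := [seq E <- index_enum _ | E \in C].
have cupC : \bigcup_(E in C) E = \bigcup_(E | 0 < k E) E by apply: eq_bigl => E; rewrite inE.
exists (arcs t ++ flatten [seq ncat (class_arcs E) (k E) | E <- r]).
  apply/rhs_wordsP; exists t, C, [seq ncat (class_arcs E) (k E) | E <- r]; split => //.
    apply/andP; split; first by apply/forallP => E; apply/implyP; rewrite inE; apply: kC.
    apply/forallP => x; apply/forallP => y; rewrite /= cupC -kset.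
    by apply/implyP => xv; apply/implyP; apply: path_arcs_connected.
  rewrite all2_map; apply/allP => E; rewrite mem_filter inE => /andP [kE _].
  apply/mapP; exists (k E).-1; last by rewrite prednK.
  by rewrite mem_iota add0n ltnS -wn (leq_trans (leq_pred _)).
apply: perm_count_mem => e; rewrite kcount count_cat count_flatten sumnE !big_map big_filter.
congr (_ + _); rewrite (bigID (mem C)) /= [X in _ + X]big1 ?addn0 => [|E]; last first.
  by rewrite inE -eqn0Ngt => /eqP ->.
apply: eq_bigr => E _; rewrite count_ncat count_uniq_mem ?filter_uniq ?index_enum_uniq //.
by rewrite mem_filter mem_index_enum andbT.
Qed.

Lemma class_powers_circuits n (r : seq {set node * node}) (ls : seq word) :
  all2 (fun E l => l \in class_powers n E) r ls -> {in r, forall E, circ_class E} ->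
  exists gs, [/\ all (@elem_circ N) gs,
    perm_eq (flatten ls) (flatten (map (@circ_arcs N) gs)),
    forall g, g \in gs -> [set e in circ_arcs g] \in r
  & forall E, E \in r -> exists2 g, g \in gs & E = [set e in circ_arcs g]].
Proof.
elim: r ls => [|E r IH] [|l ls] //=; first by exists [::].
case/andP => /mapP [m _ ->] lsr rC.
have [g eg Eg] := circ_classP (rC E (mem_head _ _)).
have [|gs [egs perm_gs gsr rgs]] := IH ls lsr.
  by move=> E' E'r; apply: rC; rewrite in_cons E'r orbT.
exists (nseq m.+1 g ++ gs); split.
- by rewrite all_cat egs andbT; apply/allP => g' /nseqP [-> _].
- rewrite map_cat flatten_cat map_nseq; apply: perm_cat => //.
  by rewrite Eg; apply/perm_ncat/perm_class_arcs; case/and3P: eg.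
- move=> g'; rewrite mem_cat => /orP [/nseqP [-> _]|/gsr E'r].
    by rewrite -Eg mem_head.
  by rewrite in_cons E'r orbT.
move=> E'; rewrite in_cons => /orP [/eqP ->|/rgs [g' g'gs ->]].
  by exists g; rewrite // mem_cat mem_nseq eqxx.
by exists g'; rewrite // mem_cat g'gs orbT.
Qed.

Lemma mem_verts (E : {set node * node}) u v : (u, v) \in E -> u \in verts E.
Proof. by move=> uvE; rewrite inE; apply/existsP; exists (u, v); rewrite uvE eqxx. Qed.

Lemma walk_first_arc (w : seq node) : walk w -> exists z, (nin, z) \in arcs w.
Proof.
case: w => [//|x [|z p]]; rewrite walk_cons => /and3P [/eqP -> //= lw _].
by exists z; rewrite mem_head.
Qed.

Lemma rhs_word_perm_walk n l : l \in rhs_words N n -> exists2 w, walk w & perm_eq l (arcs w).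
Proof.
case/rhs_wordsP => t [C [ls [et /andP [/forallP CC conn] lsC ->]]].
set r := [seq E <- index_enum _ | E \in C].
have rC : {in r, forall E, circ_class E}.
  by move=> E; rewrite mem_filter => /andP [EC _]; apply: (implyP (CC E)).
have [gs [egs perm_gs gsr rgs]] := class_powers_circuits lsC rC.
move: et; rewrite elem_path_walk => /andP [wt _].
set Etot := [set e in arcs t] :|: \bigcup_(E in C) E.
pose R : rel node := fun u v => ((u, v) \in Etot) || ((v, u) \in Etot).
have arcE u v : (u, v) \in Etot ->
    (u \in t) && (v \in t) \/ exists2 g, g \in gs & (u \in g) && (v \in g).
  rewrite in_setU inE => /orP [/mem_path_arcs uv|/bigcupP [E EC uvE]]; first by left.
  have [|g ggs Eg] := rgs E; first by rewrite mem_filter EC mem_index_enum.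
  by right; exists g => //; move: uvE; rewrite Eg inE => /mem_circ_arcs.
have Rin u v : R u v ->
    (u \in t) && (v \in t) \/ exists2 g, g \in gs & (u \in g) && (v \in g).
  case/orP => /arcE; first by [].
  case=> [/andP [vt ut]|[g ggs /andP [vg ug]]]; first by left; rewrite ut vt.
  by right; exists g; rewrite ?ug ?vg.
have Rconn g : g \in gs -> forall y, y \in g -> exists2 x, x \in t & connect R x y.
  move=> ggs y yg; have [z inz] := walk_first_arc wt.
  exists nin; first by have /andP [] := mem_path_arcs inz.
  have inv : nin \in verts Etot by apply: (@mem_verts _ _ z); rewrite in_setU inE inz.
  have [y' yy'] := circ_arcs_out yg.
  have yv : y \in verts Etot.
    apply: (@mem_verts _ _ y'); rewrite in_setU; apply/orP; right; apply/bigcupP.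
    exists [set e in circ_arcs g]; last by rewrite inE.
    by move: (gsr g ggs); rewrite mem_filter => /andP [].
  by move: conn => /forallP /(_ nin) /forallP /(_ y); rewrite /= -/Etot inv yv.
have [w [ww perm_w]] := splice_circuits wt egs Rin Rconn.
by exists w => //; rewrite perm_sym (perm_trans perm_w) // perm_cat2l perm_sym.
Qed.

End Correspondence.

Local Open Scope ring_scope.

Lemma idem_sum_eq_values (V : nmodType) (idemV : idempotent_op (@GRing.add V))
    (I J : Type) (r1 : seq I) (r2 : seq J) (P1 : pred I) (P2 : pred J)
    (F : I -> V) (G : J -> V) :
  [seq F i | i <- r1 & P1 i] =i [seq G j | j <- r2 & P2 j] ->
  \sum_(i <- r1 | P1 i) F i = \sum_(j <- r2 | P2 j) G j.
Proof.
have sumE (T : Type) (r : seq T) (P : pred T) (H : T -> V) :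
    \sum_(i <- r | P i) H i = \sum_(v <- [seq H i | i <- r & P i]) v.
  by rewrite big_map big_filter.
by rewrite sumE [RHS]sumE; apply: eq_big_idem.
Qed.

Theorem proposition1 (K : comPzSemiRingType)
    (idemK : forall x : K, x + x = x)
    (N : nat) (hN : (1 <= N)%N)
    (A : 'M[K]_N) (b : 'cV[K]_N) (c : 'rV[K]_N) :
  S_N A b c =1 rhs A b c.
Proof.
move=> n; rewrite (rhs_agree A b c (leqnn n)) S_N_walk_words /word_series.
apply: idem_sum_eq_values => // v; apply/mapP/mapP => -[l]; rewrite mem_filter.
  move=> /walk_words_walk [w ww [-> wn]] ->.
  have [l' l'r perm_l'] := walk_perm_rhs_word ww wn.
  exists l'; last exact: word_coef_perm.
  by rewrite mem_filter l'r -(xdeg_perm perm_l') wn eqxx.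
case/andP => /eqP ln /rhs_word_perm_walk [w ww perm_w] ->.
exists (path_arcs w); last exact: word_coef_perm.
by rewrite mem_filter /= -ln (xdeg_perm perm_w) walk_arcs_in_walk_words.
Qed.
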